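(* If $G$ is a $3$-e.c. strongly regular graph with parameters $(v,k,\lambda,\mu)$, then $$\mu(k-\lambda-3)\ \ge\ v-2k+\mu-2.$$
   Context: A strongly regular graph with parameters $(v,k,\lambda,\mu)$ is a $k$-regular graph on $v$ vertices in which every pair of adjacent vertices has exactly $\lambda$ common neighbours and every pair of distinct nonadjacent vertices has exactly $\mu$ common neighbours; it has at least one edge and at least one pair of distinct nonadjacent vertices. A graph with vertex set $V$ is $n$-e.c. if for every pair of disjoint subsets $A,B\subseteq V$ with $|A\cup B|=n$ (either may be empty) there is a vertex $z\notin A\cup B$ adjacent to every vertex of $A$ and to no vertex of $B$. *)

From mathcomp Require Import all_boot all_order all_algebra.
Set Implicit Arguments. Unset Strict Implicit. Unset Printing Implicit Defensive.

Definition simple_graph (T : finType) (e : rel T) : Prop :=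
  symmetric e /\ irreflexive e.

Definition srg (T : finType) (e : rel T) (v k lam mu : nat) : Prop :=
  simple_graph e /\
  #|T| = v /\
  (forall x : T, #|[set y | e x y]| = k) /\
  (forall x y : T, e x y -> #|[set z | e x z && e y z]| = lam) /\
  (forall x y : T, x != y -> ~~ e x y -> #|[set z | e x z && e y z]| = mu) /\
  (exists x y : T, e x y) /\
  (exists x y : T, (x != y) && ~~ e x y).

Definition n_ec (T : finType) (e : rel T) (n : nat) : Prop :=
  forall A B : {set T}, [disjoint A & B] -> #|A :|: B| = n ->
    exists z : T, [/\ z \notin A :|: B,
                      (forall a, a \in A -> e z a) &
                      (forall b, b \in B -> ~~ e z b)].

From mathcomp Require Import all_boot all_order all_algebra zify.

Set Implicit Arguments.
Unset Strict Implicit.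
Unset Printing Implicit Defensive.

(* Fix distinct non-adjacent vertices x and y, and let F be the set of vertices
   other than x, y adjacent to neither.  Inclusion-exclusion gives
   |F| = v - 2 - (2k - mu).  By 3-e.c. every w in F has a neighbour among the
   mu common neighbours of x and y.  A common neighbour c of x and y has, besides
   its neighbours in F, the neighbours x, y, the lam common neighbours of c and x,
   and (3-e.c. again) a vertex adjacent to c and y but not to x; so c has at most
   k - lam - 3 neighbours in F.  Double counting the edges between the common
   neighbours and F yields |F| <= mu (k - lam - 3). *)

Lemma cards3 (T : finType) (a b d : T) :
  a != b -> a != d -> b != d -> #|[set a; b; d]| = 3.
Proof.
move=> ab ad bd; rewrite setUC cardsU1 cards2 ab !inE.
by rewrite negb_or eq_sym ad eq_sym bd.
Qed.

Section SimpleGraph.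

Variables (T : finType) (e : rel T).
Hypotheses (e_sym : symmetric e) (e_irr : irreflexive e).

Definition nbrs x := [set z | e x z].
Definition common_nbrs x y := [set z | e x z && e y z].
Definition far_set x y := [set w | [&& w != x, w != y, ~~ e x w & ~~ e y w]].

Lemma common_nbrsE x y : common_nbrs x y = nbrs x :&: nbrs y.
Proof. by apply/setP => z; rewrite !inE. Qed.

Lemma ec3_adj3 a b d : n_ec e 3 -> a != b -> a != d -> b != d ->
  exists z, [&& e z a, e z b & e z d].
Proof.
move=> ec ab ad bd.
have disj : [disjoint [set a; b; d] & set0] by rewrite -setI_eq0 setI0.
have card : #|[set a; b; d] :|: set0| = 3 by rewrite setU0 cards3.
have [z [_ adj _]] := ec _ _ disj card.
by exists z; rewrite !adj // !inE eqxx ?orbT.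
Qed.

Lemma ec3_adj2_nonadj a b d : n_ec e 3 -> a != b -> a != d -> b != d ->
  exists z, [&& e z a, e z b & ~~ e z d].
Proof.
move=> ec ab ad bd.
have disj : [disjoint [set a; b] & [set d]].
  by rewrite disjoint_sym disjoints1 !inE negb_or eq_sym ad eq_sym bd.
have [z [_ adj nonadj]] := ec _ _ disj (cards3 ab ad bd).
exists z; apply/and3P; split; [apply: adj | apply: adj | apply: nonadj];
  by rewrite !inE eqxx ?orbT.
Qed.

Variables (x y : T).
Hypotheses (xy : x != y) (nxy : ~~ e x y).

Lemma card_far_set : #|far_set x y| + 2 + #|nbrs x :|: nbrs y| = #|T|.
Proof.
have eF : far_set x y = ~: (x |: (y |: (nbrs x :|: nbrs y))).
  by apply/setP => w; rewrite !inE !negb_or (e_sym y w) (e_sym x w) andbA.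
have cardU : #|x |: (y |: (nbrs x :|: nbrs y))| = (#|nbrs x :|: nbrs y|).+2.
  by rewrite !cardsU1 !inE !e_irr (e_sym y x) (negbTE nxy) (negbTE xy).
by rewrite -(cardsC (x |: (y |: (nbrs x :|: nbrs y)))) cardU eF; lia.
Qed.

Hypothesis ec : n_ec e 3.

Lemma far_set_covered :
  #|far_set x y| <= \sum_(c in common_nbrs x y) #|nbrs c :&: far_set x y|.
Proof.
have cardI c : #|nbrs c :&: far_set x y| = \sum_(w in far_set x y) e c w.
  rewrite -sum1_card [LHS]big_mkcond [RHS]big_mkcond /=.
  apply: eq_bigr => w _; rewrite in_setI [w \in nbrs c]inE andbC.
  by case: (w \in far_set x y); case: (e c w).
rewrite (eq_bigr _ (fun c _ => cardI c)) exchange_big -sum1_card /=.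
apply: leq_sum => w; rewrite inE => /and4P[wx wy _ _].
rewrite ![w == _]eq_sym in wx wy.
have [z /and3P[zx zy zw]] := ec3_adj3 ec xy wx wy.
have zC : z \in common_nbrs x y by rewrite inE e_sym zx e_sym zy.
by rewrite (bigD1 z zC) /= zw.
Qed.

Lemma nbrs_far_set_card c : c \in common_nbrs x y ->
  #|nbrs c :&: far_set x y| + (#|common_nbrs c x| + 3) <= #|nbrs c|.
Proof.
rewrite inE => /andP[xc yc].
have cx : c != x by apply: contraTneq xc => ->; rewrite e_irr.
have cy : c != y by apply: contraTneq yc => ->; rewrite e_irr.
have yx : y != x by rewrite eq_sym.
have [z /and3P[zc zy zx]] := ec3_adj2_nonadj ec cy cx yx.
have zx' : z != x by apply: contraNneq nxy => <-.
have zy' : z != y by apply: contraTneq zy => ->; rewrite e_irr.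
set D := x |: (y |: (z |: common_nbrs c x)).
have cardD : #|D| = #|common_nbrs c x| + 3.
  rewrite !cardsU1 !inE (eq_sym x z) (eq_sym y z) (negbTE xy) (negbTE zx') (negbTE zy').
  by rewrite (e_sym x z) (negbTE zx) (negbTE nxy) e_irr !andbF /= !add1n addn3.
have disj : [disjoint D & nbrs c :&: far_set x y].
  rewrite disjoints_subset; apply/subsetP => w wD.
  rewrite !inE; apply/negP => /and5P[_ wx wy nxw nyw].
  move: wD; rewrite !inE (negbTE wx) (negbTE wy) (negbTE nxw) andbF orbF.
  by move=> /eqP wz; rewrite wz e_sym zy in nyw.
have sub : D :|: (nbrs c :&: far_set x y) \subset nbrs c.
  rewrite subUset subsetIl andbT !subUset !sub1set !inE.
  rewrite (e_sym c x) (e_sym c y) (e_sym c z) xc yc zc /=.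
  by apply/subsetP => w; rewrite !inE => /andP[].
rewrite -cardD addnC -(cardsUI D) (disjoint_setI0 disj) cards0 addn0.
exact: subset_leq_card.
Qed.

End SimpleGraph.

Theorem mainTheorem6 (T : finType) (e : rel T) (v k lam mu : nat) :
  srg e v k lam mu -> n_ec e 3 ->
  (mu%:Z * (k%:Z - lam%:Z - 3) >= v%:Z - 2 * k%:Z + mu%:Z - 2)%R.
Proof.
case=> -[e_sym e_irr] [cardT [reg [adj_lam [nonadj_mu [_ [x [y /andP[xy nxy]]]]]]]] ec.
have common_mu : #|common_nbrs e x y| = mu by exact: nonadj_mu.
have cardU : #|nbrs e x :|: nbrs e y| + mu = 2 * k.
  by rewrite -common_mu common_nbrsE cardsUI !reg addnn mul2n.
have far_le : #|far_set e x y| + mu * (lam + 3) <= mu * k.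
  rewrite -common_mu -!sum_nat_const.
  apply: leq_trans (leq_add (far_set_covered e_sym xy ec) (leqnn _)) _.
  rewrite -big_split /=; apply: leq_sum => c cC.
  have cx : e c x by move: cC; rewrite inE e_sym => /andP[].
  by have := nbrs_far_set_card e_sym e_irr xy nxy ec cC; rewrite adj_lam // reg.
have := card_far_set e_sym e_irr xy nxy; rewrite cardT.
move: cardU far_le; nia.
Qed.
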